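(* Let $\mathbf{x}_1,\dots,\mathbf{x}_m\in\mathbb{R}^n$ and $y_1,\dots,y_m\in\mathbb{R}$ be such that $y_i=\phi(\mathbf{x}_i)$ for $i=1,\dots,m$, for some function $\phi:\mathbb{R}^n\to\mathbb{R}$. Then for every $\varepsilon>0$ there exist $T>0$ and a function $d_T\in\mathrm{DLSE}_T$ with rational parameters such that $$|d_T(\mathbf{x}_i)-y_i|\leqslant\varepsilon,\quad i=1,\dots,m.$$
   Context: For $T>0$, $\mathrm{LSE}_T$ denotes the class of functions $f_T:\mathbb{R}^n\to\mathbb{R}$ of the form $$f_T(\mathbf{x})=T\log\Big(\sum_{k=1}^K \exp\big(\langle\boldsymbol{\alpha}^{(k)},\mathbf{x}\rangle/T+\beta_k/T\big)\Big)$$ for some positive integer $K$, vectors $\boldsymbol{\alpha}^{(k)}\in\mathbb{R}^n$ and real numbers $\beta_k$. Such a function has rational parameters if $T$ is rational and it can be written in this form with all entries of the $\boldsymbol{\alpha}^{(k)}$ and all $\beta_k$ rational. $\mathrm{DLSE}_T$ is the class of functions $g_T-h_T$ with $g_T,h_T\in\mathrm{LSE}_T$ (same $T$); such a function has rational parameters if $g_T$ and $h_T$ both have rational parameters. *)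

From HB Require Import structures.
From mathcomp Require Import all_boot all_order all_algebra.
From mathcomp Require Import all_classical all_reals all_analysis.
Set Implicit Arguments. Unset Strict Implicit. Unset Printing Implicit Defensive.
Import Order.TTheory GRing.Theory Num.Theory.
Local Open Scope ring_scope.

Definition dotv (R : realType) (n : nat) (a x : 'rV[R]_n) : R :=
  \sum_(j < n) a 0 j * x 0 j.

Definition lse (R : realType) (n K : nat) (T : R)
  (alpha : 'I_K -> 'rV[R]_n) (beta : 'I_K -> R) (x : 'rV[R]_n) : R :=
  T * ln (\sum_(k < K) expR (dotv (alpha k) x / T + beta k / T)).

Definition is_rational (R : realType) (r : R) : Prop := exists q : rat, r = ratr q.

Definition in_LSE (R : realType) (n : nat) (T : R) (f : 'rV[R]_n -> R) : Prop :=
  exists (K : nat) (alpha : 'I_K -> 'rV[R]_n) (beta : 'I_K -> R),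
    (0 < K)%N /\ forall x, f x = lse T alpha beta x.

Definition in_LSE_rat (R : realType) (n : nat) (T : R) (f : 'rV[R]_n -> R) : Prop :=
  is_rational T /\
  exists (K : nat) (alpha : 'I_K -> 'rV[R]_n) (beta : 'I_K -> R),
    [/\ (0 < K)%N,
        (forall k j, is_rational (alpha k 0 j)),
        (forall k, is_rational (beta k)) &
        forall x, f x = lse T alpha beta x].

Definition in_DLSE_rat (R : realType) (n : nat) (T : R) (d : 'rV[R]_n -> R) : Prop :=
  exists g h : 'rV[R]_n -> R,
    [/\ in_LSE_rat T g, in_LSE_rat T h & forall x, d x = g x - h x].

(** The affine functions [z_j(x) = M (|x|^2 - |x - p_j|^2)], with rational centres
    [p_j] close to the data points [x_j], satisfy: at [x_i] the largest [z_j] is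
    [z_i], and for [M] large enough the largest [z_j + b_j] is [z_i + b_i] too.
    Since [LSE_T] is within [T ln m] of the maximum of its affine pieces,
    [LSE_T(z + b) - LSE_T(z)] takes at [x_i] a value within [T ln m] of [b_i];
    choosing [b_i] rational and close to [y_i] and [T] small gives the claim. *)
From HB Require Import structures.
From mathcomp Require Import all_boot all_order all_algebra.
From mathcomp Require Import all_classical all_reals all_analysis.
From mathcomp Require Import ring lra.
Set Implicit Arguments. Unset Strict Implicit. Unset Printing Implicit Defensive.
Import Order.TTheory GRing.Theory Num.Theory.
Local Open Scope ring_scope.

Section Rationals.
Variable R : realType.

Lemma is_rational_ratr (q : rat) : is_rational (ratr q : R).
Proof. by exists q. Qed.

Lemma is_rational_nat (k : nat) : is_rational (k%:R : R).
Proof. by exists k%:R; rewrite rmorph_nat. Qed.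

Lemma is_rationalN (r : R) : is_rational r -> is_rational (- r).
Proof. by move=> [q ->]; exists (- q); rewrite rmorphN. Qed.

Lemma is_rationalD (r s : R) : is_rational r -> is_rational s -> is_rational (r + s).
Proof. by move=> [q ->] [q' ->]; exists (q + q'); rewrite rmorphD. Qed.

Lemma is_rationalM (r s : R) : is_rational r -> is_rational s -> is_rational (r * s).
Proof. by move=> [q ->] [q' ->]; exists (q * q'); rewrite rmorphM. Qed.

Lemma is_rational_dotv (n : nat) (a b : 'rV[R]_n) :
  (forall k, is_rational (a 0 k)) -> (forall k, is_rational (b 0 k)) ->
  is_rational (dotv a b).
Proof.
move=> ha hb; apply: big_ind => [|r s|k _]; first by exists 0; rewrite rmorph0.
  exact: is_rationalD.
exact: is_rationalM.
Qed.

Lemma exists_rational_near (v delta : R) : 0 < delta ->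
  exists r, is_rational r /\ `|r - v| <= delta.
Proof.
move=> delta0; have /rat_in_itvoo[q] : v - delta < v + delta by lra.
rewrite in_itv /= => /andP[lo hi]; exists (ratr q); split; first exact: is_rational_ratr.
by rewrite ler_norml; apply/andP; split; lra.
Qed.

Lemma exists_rational_approx_fun (delta : R) : 0 < delta ->
  exists f : R -> R, forall v, is_rational (f v) /\ `|f v - v| <= delta.
Proof.
move=> delta0; have [f hf] := boolp.choice (fun v => exists_rational_near v delta0).
by exists f.
Qed.

Lemma exists_pos_rat_le (c : R) : 0 < c -> exists q : rat, 0 < (ratr q : R) <= c.
Proof.
move=> c0; have /rat_in_itvoo[q] := c0.
by rewrite in_itv /= => /andP[q0 qc]; exists q; rewrite q0 ltW.
Qed.

Lemma exists_pos_rat_ubound (I : finType) (F : I -> R) :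
  exists q : rat, 0 < (ratr q : R) /\ forall i, F i <= ratr q.
Proof.
have S0 : 0 <= \sum_i `|F i| by apply: sumr_ge0.
have /rat_in_itvoo[q] : \sum_i `|F i| < \sum_i `|F i| + 1 by lra.
rewrite in_itv /= => /andP[Sq _]; exists q; split; first lra.
move=> i; rewrite (le_trans (ler_norm _)) // (le_trans _ (ltW Sq)) //.
by rewrite (bigD1 i) //= lerDl sumr_ge0.
Qed.

Lemma exists_pos_lbound (I : finType) (P : pred I) (F : I -> R) :
  (forall i, P i -> 0 < F i) -> exists2 r, 0 < r & forall i, P i -> r <= F i.
Proof.
move=> F0; have [q [q0 hq]] := exists_pos_rat_ubound (fun i => (F i)^-1).
exists (ratr q)^-1; first by rewrite invr_gt0.
by move=> i Pi; rewrite -(invrK (F i)) lef_pV2 ?posrE ?invr_gt0 ?F0.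
Qed.

End Rationals.
Arguments is_rational_ratr {R}.
Arguments is_rational_nat {R}.

Section LogSumExp.
Variable R : realType.

Lemma lse_max_bounds (K : nat) (T : R) (z : 'I_K -> R) (i : 'I_K) :
  0 < T -> (forall k, z k <= z i) ->
  z i <= T * ln (\sum_k expR (z k / T)) <= z i + T * ln K%:R.
Proof.
move=> T0 zi.
have K0 : (0 < K)%N := leq_ltn_trans (leq0n i) (ltn_ord i).
have Si : expR (z i / T) <= \sum_k expR (z k / T).
  by rewrite (bigD1 i) //= lerDl sumr_ge0.
have S0 : 0 < \sum_k expR (z k / T) := lt_le_trans (expR_gt0 _) Si.
have SK : \sum_k expR (z k / T) <= K%:R * expR (z i / T).
  rewrite -[K in K%:R]card_ord mulr_natl -sumr_const ler_sum // => k _.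
  by rewrite ler_expR ler_pM2r ?invr_gt0.
apply/andP; split.
  by rewrite -ler_pdivrMl // mulrC -[X in X <= _]expRK ler_ln ?posrE ?expR_gt0.
rewrite -[X in X + _](mulfVK (lt0r_neq0 T0)) (mulrC _ T) -mulrDr ler_pM2l //.
rewrite addrC -[X in _ <= _ + X]expRK -lnM ?posrE ?expR_gt0 ?ltr0n //.
by rewrite ler_ln ?posrE ?mulr_gt0 ?expR_gt0 ?ltr0n.
Qed.

Lemma lseE (n K : nat) (T : R) (alpha : 'I_K -> 'rV[R]_n) (beta : 'I_K -> R)
    (a : 'rV[R]_n) :
  lse T alpha beta a = T * ln (\sum_k expR ((dotv (alpha k) a + beta k) / T)).
Proof. by rewrite /lse; congr (_ * ln _); apply: eq_bigr => k _; rewrite mulrDl. Qed.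

Lemma lse_shift_near (n K : nat) (T : R) (alpha : 'I_K -> 'rV[R]_n)
    (gamma b : 'I_K -> R) (a : 'rV[R]_n) (i : 'I_K) :
  0 < T ->
  let z k := dotv (alpha k) a + gamma k in
  (forall k, z k <= z i) -> (forall k, z k + b k <= z i + b i) ->
  `|lse T alpha (fun k => gamma k + b k) a - lse T alpha gamma a - b i|
    <= T * ln K%:R.
Proof.
move=> T0 z zi zbi; rewrite !lseE.
under eq_bigr do rewrite addrA.
have /andP[g1 g2] := lse_max_bounds T0 zbi.
have /andP[h1 h2] := lse_max_bounds T0 zi.
by rewrite ler_norml; apply/andP; split; lra.
Qed.

Lemma in_DLSE_rat_lseB (n K : nat) (T : R) (alpha : 'I_K -> 'rV[R]_n)
    (beta gamma : 'I_K -> R) :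
  (0 < K)%N -> is_rational T -> (forall k j, is_rational (alpha k 0 j)) ->
  (forall k, is_rational (beta k)) -> (forall k, is_rational (gamma k)) ->
  in_DLSE_rat T (fun v => lse T alpha beta v - lse T alpha gamma v).
Proof.
move=> K0 Tq aq bq cq; exists (lse T alpha beta), (lse T alpha gamma).
by split=> //; split=> //; [exists K, alpha, beta | exists K, alpha, gamma].
Qed.

Lemma in_DLSE_rat0 (n : nat) : in_DLSE_rat 1 (fun _ : 'rV[R]_n => 0).
Proof.
have q0 : is_rational (0 : R) by exact: is_rational_nat 0.
pose g := lse 1 (fun _ : 'I_1 => 0 : 'rV[R]_n) (fun=> 0).
have -> : (fun _ => 0) = (fun v => g v - g v) by apply: boolp.funext => v; rewrite subrr.
by apply: in_DLSE_rat_lseB => // [|k j]; [exact: is_rational_nat 1 | rewrite mxE].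
Qed.

End LogSumExp.

Section Centres.
Variables (R : realType) (n : nat).
Implicit Types (a c p q : 'rV[R]_n).

Definition sqdist a p : R := \sum_(k < n) (a 0 k - p 0 k) ^+ 2.

Lemma dotv_sqdist (M : R) a p :
  dotv ((2 * M) *: p) a - M * dotv p p = M * (dotv a a - sqdist a p).
Proof.
rewrite /dotv /sqdist mulrBr !mulr_sumr -!sumrB.
by apply: eq_bigr => k _; rewrite mxE; ring.
Qed.

Lemma sqdist_le a p (r : R) :
  (forall k, `|p 0 k - a 0 k| <= r) -> sqdist a p <= n%:R * r ^+ 2.
Proof.
move=> hp; rewrite -[n in n%:R]card_ord mulr_natl -sumr_const ler_sum // => k _.
by rewrite -real_normK ?num_real // distrC lerXn2r ?nnegrE // (le_trans _ (hp k)).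
Qed.

Lemma sqdist_lt a c p q (r : R) (k : 'I_n) :
  n.+1%:R * r < `|a 0 k - c 0 k| ->
  (forall k, `|p 0 k - a 0 k| <= r) -> (forall k, `|q 0 k - c 0 k| <= r) ->
  sqdist a p < sqdist a q.
Proof.
move=> hac hp hq.
have r0 : 0 <= r := le_trans (normr_ge0 _) (hp k).
have hk : (a 0 k - q 0 k) ^+ 2 <= sqdist a q.
  by rewrite /sqdist (bigD1 k) //= lerDl sumr_ge0 // => j _; apply: sqr_ge0.
have far : n%:R * r < `|a 0 k - q 0 k|.
  have := ler_distD (q 0 k) (a 0 k) (c 0 k); have := hq k.
  by rewrite -natr1 mulrDl mul1r in hac; lra.
have far2 : (n%:R * r) ^+ 2 < (a 0 k - q 0 k) ^+ 2.
  by rewrite -[X in _ < X]real_normK ?num_real // ltrXn2r ?nnegrE ?mulr_ge0.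
apply: (le_lt_trans (sqdist_le hp)); apply: lt_le_trans hk; apply: le_lt_trans far2.
rewrite exprMn ler_wpM2r ?sqr_ge0 // expr2 -{1}(mulr1 n%:R).
by case: n => [|n']; rewrite ?mul0r // ler_wpM2l ?ler1n.
Qed.

Lemma exists_rational_centres (m : nat) (x : 'I_m -> 'rV[R]_n) :
  exists p : 'I_m -> 'rV[R]_n,
    [/\ forall j k, is_rational (p j 0 k),
        forall i j, x i = x j -> p i = p j &
        forall i j, x i != x j -> sqdist (x i) (p i) < sqdist (x i) (p j)].
Proof.
pose gap (t : 'I_m * 'I_m * 'I_n) := `|x t.1.1 0 t.2 - x t.1.2 0 t.2|.
have [delta delta0 hdelta] :
    exists2 delta, 0 < delta & forall t, gap t != 0 -> delta <= gap t.
  by apply: exists_pos_lbound => t; rewrite lt0r normr_ge0 andbT.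
have r0 : 0 < delta / n.+2%:R by rewrite divr_gt0.
have [f hf] := exists_rational_approx_fun r0.
exists (fun j => \row_k f (x j 0 k)); split.
- by move=> j k; rewrite mxE; case: (hf (x j 0 k)).
- by move=> i j ->.
move=> i j /eqP xij.
have [k xk] : exists k, x i 0 k != x j 0 k.
  case: (pickP (fun k => x i 0 k != x j 0 k)) => [k xk|same]; first by exists k.
  by case: xij; apply/rowP => k; apply/eqP/negbFE/same.
apply: (sqdist_lt (c := x j) (r := delta / n.+2%:R) (k := k)) => [|l|l]; last 2 first.
- by rewrite mxE; case: (hf (x i 0 l)).
- by rewrite mxE; case: (hf (x j 0 l)).
have := hdelta (i, j, k); rewrite /gap /= normr_eq0 subr_eq0 => /(_ xk).
apply: lt_le_trans.
by rewrite mulrA ltr_pdivrMr ?ltr0n // [X in _ < X]mulrC ltr_pM2r ?ltr_nat.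
Qed.

End Centres.

Section Interpolation.
Variables (R : realType) (n m : nat) (x : 'I_m -> 'rV[R]_n) (b : 'I_m -> R).
Variables (p : 'I_m -> 'rV[R]_n) (M : R).
Hypothesis b_consistent : forall i j, x i = x j -> b i = b j.
Hypothesis p_consistent : forall i j, x i = x j -> p i = p j.
Hypothesis p_nearest :
  forall i j, x i != x j -> sqdist (x i) (p i) < sqdist (x i) (p j).

Definition slopes (ij : 'I_m * 'I_m) : R :=
  (b ij.2 - b ij.1) / (sqdist (x ij.1) (p ij.2) - sqdist (x ij.1) (p ij.1)).

Hypothesis M_ge0 : 0 <= M.
Hypothesis M_slopes : forall ij, slopes ij <= M.

Definition centre_slope j := (2 * M) *: p j.
Definition centre_offset j := - (M * dotv (p j) (p j)).

Lemma centre_offset_value i j :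
  dotv (centre_slope j) (x i) + centre_offset j
  = M * (dotv (x i) (x i) - sqdist (x i) (p j)).
Proof. exact: dotv_sqdist. Qed.

Lemma sqdist_centre_le i j : sqdist (x i) (p i) <= sqdist (x i) (p j).
Proof.
have [xij|xij] := eqVneq (x i) (x j); first by rewrite (p_consistent xij).
exact/ltW/p_nearest.
Qed.

Lemma b_le_slopes i j :
  b j - b i <= M * (sqdist (x i) (p j) - sqdist (x i) (p i)).
Proof.
have [xij|xij] := eqVneq (x i) (x j).
  by rewrite (b_consistent xij) (p_consistent xij) !subrr mulr0.
have D0 : 0 < sqdist (x i) (p j) - sqdist (x i) (p i) by rewrite subr_gt0 p_nearest.
by rewrite -ler_pdivrMr // (le_trans _ (M_slopes (i, j))).
Qed.

Definition interpolant (T : R) (v : 'rV[R]_n) :=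
  lse T centre_slope (fun j => centre_offset j + b j) v
  - lse T centre_slope centre_offset v.

Lemma in_DLSE_rat_interpolant (T : R) :
  (0 < m)%N -> is_rational T -> (forall j k, is_rational (p j 0 k)) ->
  is_rational M -> (forall j, is_rational (b j)) ->
  in_DLSE_rat T (interpolant T).
Proof.
move=> m0 Tq pq Mq bq.
have offset_q j : is_rational (centre_offset j).
  by apply/is_rationalN/is_rationalM => //; apply: is_rational_dotv.
apply: in_DLSE_rat_lseB => // [j k|j]; last exact: is_rationalD.
by rewrite mxE; apply: is_rationalM => //; apply: is_rationalM => //; exact: is_rational_nat 2.
Qed.

Lemma interpolation_error (T : R) i : 0 < T ->
  `|interpolant T (x i) - b i| <= T * ln m%:R.
Proof.
move=> T0; apply: lse_shift_near => // j; rewrite !centre_offset_value.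
  by rewrite ler_wpM2l // lerD2l lerN2 sqdist_centre_le.
have := b_le_slopes i j; lra.
Qed.

End Interpolation.

Theorem corollary2 (R : realType) (n m : nat)
  (x : 'I_m -> 'rV[R]_n) (y : 'I_m -> R) (phi : 'rV[R]_n -> R) :
  (forall i, y i = phi (x i)) ->
  forall eps : R, 0 < eps ->
  exists T : R, 0 < T /\
    exists d : 'rV[R]_n -> R,
      in_DLSE_rat T d /\ forall i, `|d (x i) - y i| <= eps.
Proof.
move=> hy eps eps0.
have [m0|m0] := posnP m.
  exists 1; split => //; exists (fun=> 0); split; first exact: in_DLSE_rat0.
  by move=> i; suff : (i < 0)%N by []; rewrite -m0.
have eps2 : 0 < eps / 2 by lra.
have [rb hrb] := exists_rational_approx_fun eps2.
pose b j := rb (y j).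
have b_cons i j : x i = x j -> b i = b j by rewrite /b !hy => ->.
have [p [p_rat p_cons p_near]] := exists_rational_centres x.
have [qM [M0 hM]] := exists_pos_rat_ubound (slopes x b p).
have lnm0 : 0 <= ln (m%:R : R) by rewrite ln_ge0 // ler1n.
have [qT /andP[T0 Tle]] : exists qT : rat, 0 < (ratr qT : R) <= eps / 2 / (ln m%:R + 1).
  by apply: exists_pos_rat_le; rewrite divr_gt0 //; lra.
have Tln : ratr qT * ln m%:R <= eps / 2.
  by rewrite ler_pdivlMr ?ltr_wpDl // in Tle; nra.
exists (ratr qT); split => //; exists (interpolant b p (ratr qM) (ratr qT)); split.
  apply: in_DLSE_rat_interpolant m0 (is_rational_ratr _) p_rat (is_rational_ratr _) _.
  by move=> j; case: (hrb (y j)).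
move=> i; have err := interpolation_error b_cons p_cons p_near (ltW M0) hM i T0.
have [_ hbi] := hrb (y i).
rewrite (le_trans (ler_distD (b i) _ _)) //; lra.
Qed.
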